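(* Let $1\le r\le s\le t$ and let $u=ABCd$, $v=A'B'C'd'$ be distinct vertices of $E3C(r,s,t)$ with $A=A'$, $C=C'$ and $d=d'$ (any $d\in\{0,1,2\}$). Then there exist $2r+2$ pairwise internally disjoint $u$–$v$ paths in $E3C(r,s,t)$, each of length at most $s+6$.
   Context: The exchanged 3-ary $n$-cube $E3C(r,s,t)$ ($r,s,t\ge1$, $n=r+s+t+1$): vertices are strings written $x=ABCd$ with $A\in\{0,1,2\}^r$, $B\in\{0,1,2\}^s$, $C\in\{0,1,2\}^t$, $d\in\{0,1,2\}$. Two distinct vertices $x=ABCd$, $y=A'B'C'd'$ are adjacent iff one of: (E0) $A=A',B=B',C=C'$ and $d\ne d'$; (E1) $d=d'=0$, $A=A'$, $B=B'$ and $C,C'$ differ in exactly one position; (E2) $d=d'=1$, $A=A'$, $C=C'$ and $B,B'$ differ in exactly one position; (E3) $d=d'=2$, $B=B'$, $C=C'$ and $A,A'$ differ in exactly one position. Paths are internally disjoint if they share no vertices other than their endpoints; length = number of edges. *)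

From mathcomp Require Import all_boot.
Set Implicit Arguments. Unset Strict Implicit. Unset Printing Implicit Defensive.

Definition word (n : nat) := {ffun 'I_n -> 'I_3}.

Definition differ1 (n : nat) (X Y : word n) : bool :=
  #|[set i : 'I_n | X i != Y i]| == 1.

Definition vtx (r s t : nat) : finType :=
  (word r * word s * word t * 'I_3)%type.

Definition vA r s t (x : vtx r s t) : word r := x.1.1.1.
Definition vB r s t (x : vtx r s t) : word s := x.1.1.2.
Definition vC r s t (x : vtx r s t) : word t := x.1.2.
Definition vd r s t (x : vtx r s t) : 'I_3 := x.2.

Definition e3c_adj (r s t : nat) (x y : vtx r s t) : bool :=
  [|| [&& vA x == vA y, vB x == vB y, vC x == vC y & vd x != vd y]
    , [&& val (vd x) == 0, val (vd y) == 0, vA x == vA y, vB x == vB y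
        & differ1 (vC x) (vC y)]
    , [&& val (vd x) == 1, val (vd y) == 1, vA x == vA y, vC x == vC y
        & differ1 (vB x) (vB y)]
    | [&& val (vd x) == 2, val (vd y) == 2, vB x == vB y, vC x == vC y
        & differ1 (vA x) (vA y)] ].

(* A u-v path is represented by the sequence q of its internal vertices:
   the vertex sequence is u :: q ++ [:: v], consecutive vertices adjacent,
   all vertices distinct. *)
Definition is_path_int (r s t : nat) (u v : vtx r s t) (q : seq (vtx r s t)) : bool :=
  path (@e3c_adj r s t) u (rcons q v) && uniq (u :: rcons q v).

Definition path_length (T : Type) (q : seq T) : nat := (size q).+1.

(* Inside layer d = 1 the vertices with fixed A and C form a 3-ary s-cube, in
   which B and B', at Hamming distance h, are joined by 2s internally disjoint
   routes of length at most h + 2: the h rotations of the order in which one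
   geodesic corrects the mismatched positions, and, for every position j and
   letter c different from B j and B' j, a detour that first writes c at j.
   A route can also leave the frame (A, C): step to an adjacent frame p inside
   an outer layer (layer 0 changes one letter of C, layer 2 one letter of A),
   follow a geodesic in layer 1 over p, and come back; this costs at most six
   extra edges.  For d = 1 the 2s cube routes and one such bridge through each
   outer layer give 2s + 2 paths.  For d in {0, 2} the 2t resp. 2r frames
   adjacent to (A, C) in layer d, the geodesic in layer 1 over (A, C) itself,
   and a bridge through the other outer layer give at least 2r + 2 paths.
   Paths through different frames are disjoint, and the ones sharing a frame
   are separated by their layers. *)

From mathcomp Require Import all_boot zify.
Set Implicit Arguments. Unset Strict Implicit. Unset Printing Implicit Defensive.

Section Routes.
Variables (T : eqType) (e : rel T).

Definition route (x y : T) (q : seq T) : bool :=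
  path e x (rcons q y) && uniq (x :: rcons q y).

Definition extend (x : T) (q : seq T) (y : T) : seq T := x :: rcons q y.

Lemma mem_extend z x q y : (z \in extend x q y) = [|| z == x, z \in q | z == y].
Proof. by rewrite /extend inE mem_rcons inE (orbC (z == y)). Qed.

Lemma size_extend x q y : size (extend x q y) = (size q).+2.
Proof. by rewrite /= size_rcons. Qed.

Lemma route_extend x y q x' y' (P : pred T) :
  route x y q -> e x' x -> e y y' -> {in extend x q y, forall z, P z} ->
  ~~ P x' -> ~~ P y' -> x' != y' -> route x' y' (extend x q y).
Proof.
move=> /andP [pq uq] ex ey inP Px' Py' x'y'.
have notin z : ~~ P z -> z \notin extend x q y by apply: contra => /inP.
apply/andP; split; first by rewrite /extend /= ex rcons_path pq last_rcons ey.
rewrite -[extend _ _ _]/(x :: rcons q y) in notin *.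
by rewrite cons_uniq rcons_uniq mem_rcons inE negb_or x'y' notin // notin.
Qed.

Lemma path_iota (f : nat -> T) a n :
  (forall k, a <= k < a + n -> e (f k) (f k.+1)) ->
  path e (f a) [seq f k | k <- iota a.+1 n].
Proof.
elim: n a => [|n IH] a step //=.
rewrite step ?IH //; last by lia.
by move=> k lt_k; apply: step; lia.
Qed.

Lemma iota_rcons a n : iota a n.+1 = rcons (iota a n) (a + n).
Proof. by rewrite -addn1 iotaD cats1. Qed.

Lemma route_iota (f : nat -> T) n : 0 < n ->
  (forall k, k < n -> e (f k) (f k.+1)) -> {in gtn n.+1 &, injective f} ->
  route (f 0) (f n) [seq f k | k <- iota 1 n.-1].
Proof.
case: n => // n _ step inj_f; rewrite /route -map_rcons -iota_rcons.
rewrite -[f 0 :: _]/[seq f k | k <- iota 0 n.+2].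
rewrite path_iota => [|k]; last by rewrite add0n => /andP [_]; apply: step.
by rewrite map_inj_in_uniq ?iota_uniq // => k k'; rewrite !mem_iota; apply: inj_f.
Qed.

Lemma route_iota_extend (f : nat -> T) n x y :
  e x (f 0) -> e (f n) y -> (forall k, k < n -> e (f k) (f k.+1)) ->
  {in gtn n.+1 &, injective f} -> (forall k, f k != x) -> (forall k, f k != y) -> x != y ->
  route x y [seq f k | k <- iota 0 n.+1].
Proof.
move=> ex ey step inj_f fx fy xy; apply/andP; split.
  rewrite /= ex rcons_path path_iota => [|k]; last by rewrite add0n => /andP [_]; apply: step.
  rewrite /= (last_map f); suff -> : last 0 (iota 1 n) = n by [].
  by case: n {ex ey step inj_f fx fy} => // n; rewrite iota_rcons last_rcons add1n.
have notin z : (forall k, f k != z) -> z \notin [seq f k | k <- iota 0 n.+1].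
  by move=> fz; apply/mapP => [[k _ /eqP]]; rewrite eq_sym (negbTE (fz k)).
rewrite cons_uniq rcons_uniq mem_rcons inE negb_or xy !notin //.
by rewrite map_inj_in_uniq ?iota_uniq // => k k'; rewrite !mem_iota; apply: inj_f.
Qed.

End Routes.

Lemma route_map (T T' : eqType) (e : rel T) (e' : rel T') (f : T -> T') x y q :
  injective f -> {homo f : a b / e a b >-> e' a b} -> route e x y q ->
  route e' (f x) (f y) (map f q).
Proof.
move=> inj_f hom_f /andP [pq uq]; apply/andP; split.
  by rewrite -map_rcons path_map; apply: sub_path pq => a b /hom_f.
by rewrite -map_rcons -map_cons map_inj_uniq.
Qed.

Lemma disjoint_seqP (T : finType) (p q : seq T) :
  reflect (forall z, z \in p -> z \notin q) [disjoint p & q].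
Proof. by rewrite disjoint_has; apply: hasPn. Qed.

Lemma disjoint_map (T T' : finType) (f : T -> T') (p q : seq T) :
  injective f -> [disjoint p & q] -> [disjoint map f p & map f q].
Proof.
move=> inj_f /disjoint_seqP pq; apply/disjoint_seqP => _ /mapP [z zp ->].
by rewrite mem_map // pq.
Qed.

Lemma pairwise_disjoint_map (I : eqType) (T : finType) (F : I -> seq T) (l : seq I) :
  uniq l -> {in l &, forall a b, a != b -> [disjoint F a & F b]} ->
  pairwise (fun p q : seq T => [disjoint p & q]) (map F l).
Proof.
elim: l => //= a l IH /andP [al ul] disjF; apply/andP; split.
  apply/allP => _ /mapP [b bl ->]; apply: disjF; rewrite ?inE ?eqxx ?bl ?orbT //.
  by apply: contraNneq al => ->.
by apply: IH => // b b' bl b'l; apply: disjF; rewrite inE ?bl ?b'l orbT.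
Qed.

Lemma uniq_pairwise_disjoint (T : finType) (L : seq (seq T)) :
  pairwise (fun p q => [disjoint p & q]) L -> all (fun q => q != [::]) (behead L) -> uniq L.
Proof.
have self_disj (q : seq T) : q != [::] -> ~~ [disjoint q & q].
  by case: q => // z q _; apply/negP => /disjoint_seqP /(_ z (mem_head z q)); rewrite mem_head.
case: L => //= q L /andP [dq dL] neL; apply/andP; split.
  by apply/negP => qL; move: (allP dq q qL); apply/negP/self_disj/(allP neL).
rewrite uniq_pairwise; apply: (sub_in_pairwise (P := fun q => q != [::])) dL => //.
by move=> a b a_ne _ /=; apply: contraTneq => <-; apply: self_disj.
Qed.

Lemma take_pairwise_disjoint (T : finType) (P : pred (seq T)) (L : seq (seq T)) n :
  n <= size L -> all P L -> pairwise (fun p q => [disjoint p & q]) L ->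
  all (fun q => q != [::]) (behead L) ->
  exists ps : seq (seq T),
    [/\ size ps = n, uniq ps, all P ps &
        forall i j, i < size ps -> j < size ps -> i != j ->
          [disjoint nth [::] ps i & nth [::] ps j]].
Proof.
move=> le_n PL dL neL; exists (take n L); split.
- exact: size_takel.
- exact/take_uniq/uniq_pairwise_disjoint.
- by apply/allP => q /mem_take; apply: (allP PL).
have {dL} : pairwise (fun p q => [disjoint p & q]) (take n L).
  by move: dL; rewrite -{1}(cat_take_drop n L) pairwise_cat => /and3P [].
move=> /(pairwiseP [::]) dL i j lt_i lt_j; case: ltngtP => // [lt_ij|lt_ji] _.
  exact: dL.
by rewrite disjoint_sym; apply: dL.
Qed.

Definition cyc_dist (h m p : nat) : nat := if m <= p then p - m else p + h - m.

Lemma index_rot (T : eqType) (s : seq T) m x : uniq s -> x \in s -> m <= size s ->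
  index x (rot m s) = cyc_dist (size s) m (index x s).
Proof.
move=> us xs le_ms; set k := index x s.
have lt_ks : k < size s by rewrite index_mem.
have nth_rot : nth x (rot m s) (cyc_dist (size s) m k) = x.
  rewrite -{2}(nth_index x xs) /rot nth_cat size_drop /cyc_dist -/k.
  case: (leqP m k) => [le_mk|lt_km].
    by rewrite ifT ?nth_drop ?subnKC //; lia.
  by rewrite ifF ?nth_take; [congr nth|..]; lia.
rewrite -{1}nth_rot index_uniq ?rot_uniq ?size_rot // /cyc_dist.
by case: ifP; lia.
Qed.

(* An arc {p | cyc_dist h m p < l} of a proper length determines its start m:
   m lies on the arc and its cyclic predecessor does not. *)
Lemma cyc_dist_start h m m' l l' : m < h -> m' < h -> 0 < l < h -> 0 < l' < h ->
  (forall p, p < h -> (cyc_dist h m p < l) = (cyc_dist h m' p < l')) -> m = m'.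
Proof.
move=> lt_mh lt_m'h l_in l'_in arc.
have lt_prev : (if m == 0 then h.-1 else m.-1) < h by case: ifP; lia.
move: (arc m lt_mh) (arc _ lt_prev); rewrite /cyc_dist.
by case: (m =P 0) => [m0|/eqP m0]; do !case: ifP => ? //=; lia.
Qed.

Definition o0 : 'I_3 := @Ordinal 3 0 isT.
Definition o1 : 'I_3 := @Ordinal 3 1 isT.
Definition o2 : 'I_3 := @Ordinal 3 2 isT.

Lemma enum_I3 : enum 'I_3 = [:: o0; o1; o2].
Proof. by apply: (inj_map val_inj); rewrite val_enum_ord. Qed.

Section WordBasics.
Variable n : nat.
Implicit Types (X Y : word n) (i : 'I_n) (c : 'I_3).

Definition upd X i c : word n := [ffun k => if k == i then c else X k].

Lemma differ1P X Y i : (forall k, (X k != Y k) = (k == i)) -> differ1 X Y.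
Proof. by move=> XY; apply/cards1P; exists i; apply/setP => k; rewrite !inE XY. Qed.

Lemma differ1C X Y : differ1 X Y = differ1 Y X.
Proof.
rewrite /differ1; suff -> : [set k | X k != Y k] = [set k | Y k != X k] by [].
by apply/setP => k; rewrite !inE eq_sym.
Qed.

Lemma differ1_neq X Y : differ1 X Y -> X != Y.
Proof.
apply: contraL => /eqP ->; rewrite /differ1.
suff -> : [set k | Y k != Y k] = set0 by rewrite cards0.
by apply/setP => k; rewrite !inE eqxx.
Qed.

Lemma differ1_upd X i c : c != X i -> differ1 X (upd X i c).
Proof.
move=> cX; apply: (differ1P (i := i)) => k; rewrite ffunE.
by case: (k =P i) => [->|_]; rewrite ?eqxx // eq_sym.
Qed.

Lemma upd_inj X i c i' c' : c != X i -> upd X i c = upd X i' c' -> (i, c) = (i', c').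
Proof.
move=> cX /ffunP /(_ i); rewrite !ffunE eqxx.
by case: eqP => [-> -> //|_ cXi]; rewrite cXi eqxx in cX.
Qed.

Definition mismatch X Y : seq 'I_n := [seq i <- enum 'I_n | X i != Y i].

Lemma mem_mismatch X Y i : (i \in mismatch X Y) = (X i != Y i).
Proof. by rewrite mem_filter mem_enum andbT. Qed.

Lemma uniq_mismatch X Y : uniq (mismatch X Y).
Proof. by rewrite filter_uniq ?enum_uniq. Qed.

Definition fresh X Y : seq ('I_n * 'I_3) :=
  [seq (i, c) | i <- enum 'I_n, c <- [seq c <- enum 'I_3 | (c != X i) && (c != Y i)]].

Lemma mem_fresh X Y p : (p \in fresh X Y) = (p.2 != X p.1) && (p.2 != Y p.1).
Proof.
apply/allpairsPdep/idP => [[i [c [_ + ->]]]|fp]; first by rewrite mem_filter => /andP [].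
by exists p.1, p.2; rewrite mem_enum mem_filter mem_enum fp; case: p {fp}.
Qed.

Lemma uniq_fresh X Y : uniq (fresh X Y).
Proof.
apply: allpairs_uniq_dep; rewrite ?enum_uniq //.
  by move=> i _; rewrite filter_uniq ?enum_uniq.
by move=> [i c] [i' c'] _ _ [-> ->].
Qed.

Lemma size_fresh X Y : size (fresh X Y) + size (mismatch X Y) = 2 * n.
Proof.
have letters (x y : 'I_3) : size [seq c <- enum 'I_3 | (c != x) && (c != y)] + (x != y) = 2.
  by rewrite enum_I3; case: x y => [[|[|[|k]]] ?] [[|[|[|k']]] ?].
rewrite size_allpairs_dep size_filter; transitivity (2 * size (enum 'I_n)).
  elim: (enum 'I_n) => //= i e IH; move: (letters (X i) (Y i)).
  by case: (X i != Y i) => /=; lia.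
by rewrite -cardE card_ord.
Qed.

End WordBasics.

Section Neighbours.
Variables (n : nat) (X : word n).

Definition word_nbrs : seq (word n) := [seq upd X p.1 p.2 | p <- fresh X X].

Lemma word_nbrs_differ1 Y : Y \in word_nbrs -> differ1 X Y.
Proof. by case/mapP => p; rewrite mem_fresh andbb => /differ1_upd ? ->. Qed.

Lemma uniq_word_nbrs : uniq word_nbrs.
Proof.
rewrite map_inj_in_uniq ?uniq_fresh // => p p'; rewrite mem_fresh andbb => pX _.
by case: p p' pX => i c [i' c'] /= /upd_inj; apply.
Qed.

Lemma size_word_nbrs : size word_nbrs = 2 * n.
Proof.
rewrite size_map -(size_fresh X X).
suff -> : mismatch X X = [::] by rewrite addn0.
by rewrite /mismatch (eq_filter (a2 := pred0)) ?filter_pred0 // => i; rewrite eqxx.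
Qed.

End Neighbours.

Definition flip_word n (X Y : word n) (ps : seq 'I_n) (l : nat) : word n :=
  [ffun i => if index i ps < l then Y i else X i].

Section Flip.
Variables (n : nat) (X Y : word n) (ps : seq 'I_n).
Hypotheses (uniq_ps : uniq ps) (mem_ps : forall i, (i \in ps) = (X i != Y i)).
Local Notation flip := (flip_word X Y ps).

Lemma flip_word0 : flip 0 = X.
Proof. by apply/ffunP => i; rewrite ffunE. Qed.

Lemma flip_word_size : flip (size ps) = Y.
Proof.
apply/ffunP => i; rewrite ffunE index_mem mem_ps.
by case: eqP.
Qed.

Lemma flip_word_step l : l < size ps -> differ1 (flip l) (flip l.+1).
Proof.
case Eps: ps => [//|i0 ps'] lt_l; rewrite -Eps in lt_l *.
apply: (differ1P (i := nth i0 ps l)) => k; rewrite !ffunE.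
have [kps|kps] := boolP (k \in ps); last first.
  rewrite -index_mem -leqNgt in kps.
  have ge_kl : l.+1 <= index k ps := leq_trans lt_l kps.
  rewrite !ifF ?eqxx; try by apply/negbTE; rewrite -leqNgt // ltnW.
  by apply/esym/negbTE; apply: contraTneq kps => ->; rewrite index_uniq // -ltnNge.
case: (k =P nth i0 ps l) => [->|ne_k].
  by rewrite index_uniq // ltnn ltnSn -mem_ps mem_nth.
have ne_kl : index k ps != l by apply: contra_not_neq ne_k => <-; rewrite nth_index.
case: (ltngtP (index k ps) l) ne_kl => // [lt_kl|lt_lk] _.
- by rewrite ltnS ltnW // eqxx.
- by rewrite ltnS leqNgt lt_lk eqxx.
Qed.

Lemma flip_word_inj l l' : l <= size ps -> l' <= size ps -> flip l = flip l' -> l = l'.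
Proof.
wlog lt_ll' : l l' / l < l'.
  move=> gen le_l le_l' E; case: (ltngtP l l') => // [lt|lt]; first exact: gen.
  by apply/esym/(gen l' l).
move=> _ le_l' /ffunP; case Eps: ps => [|i0 ps']; first by rewrite Eps /= in le_l'; lia.
have lt_l : l < size ps := leq_trans lt_ll' le_l'.
rewrite -Eps => /(_ (nth i0 ps l)); rewrite !ffunE index_uniq // ltnn lt_ll' => XY.
by have := mem_nth i0 lt_l; rewrite mem_ps XY eqxx.
Qed.

Lemma flip_word_letter l i : (flip l i == X i) || (flip l i == Y i).
Proof. by rewrite ffunE; case: ifP; rewrite eqxx ?orbT. Qed.

End Flip.

Section Cube.
Variables (s : nat) (B B' : word s).
Hypothesis neq_BB' : B != B'.

Local Notation dl := (mismatch B B').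
Local Notation h := (size (mismatch B B')).

Lemma size_mismatch_gt0 : 0 < h.
Proof.
rewrite lt0n size_eq0; apply: contra neq_BB' => /eqP dl0.
by apply/eqP/ffunP => i; apply/eqP; rewrite -[_ == _]negbK -mem_mismatch dl0.
Qed.

Lemma size_mismatch_le : h <= s.
Proof. by rewrite size_filter (leq_trans (count_size _ _)) // size_enum_ord. Qed.

Definition rot_route m : seq (word s) :=
  [seq flip_word B B' (rot m dl) l | l <- iota 1 h.-1].

Definition fresh_route (j : 'I_s) (c : 'I_3) : seq (word s) :=
  let ps := [seq i <- dl | i != j] in
  [seq flip_word (upd B j c) (upd B' j c) ps l | l <- iota 0 (size ps).+1].

Lemma route_rot_route m : route (@differ1 s) B B' (rot_route m).
Proof.
have uniq_ps : uniq (rot m dl) by rewrite rot_uniq uniq_mismatch.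
have mem_ps i : (i \in rot m dl) = (B i != B' i) by rewrite mem_rot mem_mismatch.
rewrite -{1}(flip_word0 B B' (rot m dl)) -(flip_word_size mem_ps) size_rot.
apply: route_iota size_mismatch_gt0 _ _ => [k|k k']; rewrite -(size_rot m).
  exact: flip_word_step uniq_ps mem_ps k.
by move=> kh k'h; exact: (flip_word_inj uniq_ps mem_ps kh k'h).
Qed.

Lemma route_fresh_route j c : c != B j -> c != B' j -> route (@differ1 s) B B' (fresh_route j c).
Proof.
move=> cB cB'; set ps := [seq i <- dl | i != j].
have uniq_ps : uniq ps by rewrite filter_uniq ?uniq_mismatch.
have mem_ps i : (i \in ps) = (upd B j c i != upd B' j c i).
  by rewrite mem_filter mem_mismatch !ffunE; case: eqP; rewrite ?eqxx.
have letter_j l : flip_word (upd B j c) (upd B' j c) ps l j = c.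
  by rewrite !ffunE eqxx; case: ifP.
apply: route_iota_extend => [||k|k k'|k|k|//].
- by rewrite flip_word0; apply: differ1_upd.
- by rewrite (flip_word_size mem_ps) differ1C; apply: differ1_upd.
- exact: flip_word_step uniq_ps mem_ps k.
- by move=> kh k'h; exact: (flip_word_inj uniq_ps mem_ps kh k'h).
- by apply: contra cB => /eqP <-; rewrite letter_j.
- by apply: contra cB' => /eqP <-; rewrite letter_j.
Qed.

Lemma rot_route_letter m w : w \in rot_route m -> forall i, (w i == B i) || (w i == B' i).
Proof. by case/mapP => l _ -> i; apply: flip_word_letter. Qed.

Lemma fresh_route_letter j c w : w \in fresh_route j c ->
  w j = c /\ forall i, i != j -> (w i == B i) || (w i == B' i).
Proof.
case/mapP => l _ ->; split => [|i ij]; first by rewrite !ffunE eqxx; case: ifP.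
have := flip_word_letter (upd B j c) (upd B' j c) [seq i <- dl | i != j] l i.
by rewrite !ffunE (negbTE ij).
Qed.

Lemma eq_flip_word_index ps ps' l l' i : i \in dl ->
  flip_word B B' ps l = flip_word B B' ps' l' -> (index i ps < l) = (index i ps' < l').
Proof.
rewrite mem_mismatch => BB'i /ffunP /(_ i); rewrite !ffunE.
by do 2!case: ifP => _; rewrite // => E; rewrite E eqxx in BB'i.
Qed.

Lemma rot_routes_disjoint m m' : m < h -> m' < h -> m != m' ->
  [disjoint rot_route m & rot_route m'].
Proof.
move=> lt_m lt_m' mm'; apply/disjoint_seqP => _ /mapP [l l_in ->].
apply/mapP => [[l' l'_in E]]; move: mm'; apply/negP/negPn/eqP.
have range k : k \in iota 1 h.-1 -> 0 < k < h by rewrite mem_iota; lia.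
apply: (cyc_dist_start lt_m lt_m' (range l l_in) (range l' l'_in)) => p lt_p.
pose i0 : 'I_s := Ordinal (leq_trans lt_p size_mismatch_le).
have i_dl : nth i0 dl p \in dl by rewrite mem_nth.
rewrite -(index_uniq i0 lt_p (uniq_mismatch B B')).
rewrite -!index_rot ?uniq_mismatch ?(ltnW lt_m) ?(ltnW lt_m') //.
exact: eq_flip_word_index E.
Qed.

Definition cube_routes : seq (seq (word s)) :=
  [seq rot_route m | m <- iota 0 h] ++ [seq fresh_route p.1 p.2 | p <- fresh B B'].

Lemma size_cube_routes : size cube_routes = 2 * s.
Proof. by rewrite size_cat !size_map size_iota addnC size_fresh. Qed.

Lemma cube_routes_route :
  all (fun R => route (@differ1 s) B B' R && (size R <= h.+1)) cube_routes.
Proof.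
rewrite all_cat; apply/andP; split; apply/allP => _ /mapP [p p_in ->].
  by rewrite route_rot_route size_map size_iota; lia.
move: p_in; rewrite mem_fresh => /andP [cB cB'].
rewrite route_fresh_route // size_map size_iota ltnS size_filter.
exact: count_size.
Qed.

Lemma cube_routes_disjoint : pairwise (fun R R' => [disjoint R & R']) cube_routes.
Proof.
rewrite pairwise_cat; apply/and3P; split.
- apply/allrelP => _ _ /mapP [m _ ->] /mapP [[j c] + ->]; rewrite mem_fresh /= => /andP [cB cB'].
  apply/disjoint_seqP => w /rot_route_letter /(_ j); apply: contraL => /fresh_route_letter [-> _].
  by rewrite negb_or cB cB'.
- apply: pairwise_disjoint_map; first exact: iota_uniq.
  by move=> m m'; rewrite !mem_iota /=; apply: rot_routes_disjoint.
- apply: pairwise_disjoint_map; first exact: uniq_fresh.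
  move=> [j c] [j' c'] _; rewrite mem_fresh /= => /andP [c'B c'B'] jc.
  apply/disjoint_seqP => w /fresh_route_letter [wj w_other]; apply/negP.
  case/fresh_route_letter => wj' _; case: (j =P j') jc wj' => [<- + wj'|/eqP jj' _ wj'].
    by rewrite -wj -wj' eqxx.
  have := w_other j'; rewrite eq_sym jj' wj' => /(_ isT).
  by rewrite (negbTE c'B) (negbTE c'B').
Qed.

Lemma cube_routes_behead : all (fun R => R != [::]) (behead cube_routes).
Proof.
rewrite /cube_routes; have := size_mismatch_gt0; case Eh: h => [//|n] _.
rewrite /= all_cat; apply/andP; split; apply/allP => _ /mapP [p + ->].
  by rewrite -size_eq0 size_map size_iota Eh mem_iota; lia.
by rewrite -size_eq0 size_map size_iota.
Qed.

End Cube.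

Lemma e3c_adj_sym r s t (x y : vtx r s t) : e3c_adj x y -> e3c_adj y x.
Proof.
rewrite /e3c_adj => /or4P [/and4P [a b c d]|/and5P [d0 d0' a b c]
                           |/and5P [d0 d0' a b c]|/and5P [d0 d0' a b c]].
- by rewrite (eqP a) (eqP b) (eqP c) eq_sym d !eqxx.
- by rewrite d0 d0' (eqP a) (eqP b) differ1C c !eqxx !orbT.
- by rewrite d0 d0' (eqP a) (eqP b) differ1C c !eqxx !orbT.
- by rewrite d0 d0' (eqP a) (eqP b) differ1C c !eqxx !orbT.
Qed.

Section Frames.
Variables (r s t : nat).
Local Notation frame := (word r * word t)%type.

Definition vert (p : frame) (w : word s) (d : 'I_3) : vtx r s t := (p.1, w, p.2, d).
Definition frame_of (z : vtx r s t) : frame := (vA z, vC z).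

Lemma frame_of_vert p w d : frame_of (vert p w d) = p.
Proof. by case: p. Qed.

Lemma adj_layer p w d d' : d != d' -> e3c_adj (vert p w d) (vert p w d').
Proof. by move=> dd'; rewrite /e3c_adj /vA /vB /vC /vd /= !eqxx dd'. Qed.

Lemma adj_word p w w' : differ1 w w' -> e3c_adj (vert p w o1) (vert p w' o1).
Proof. by move=> ww'; rewrite /e3c_adj /vA /vB /vC /vd /= !eqxx ww' !orbT. Qed.

Variables (A : word r) (C : word t).
Local Notation o := (A, C).

Definition nbrs (e : 'I_3) : seq frame :=
  if e == o0 then [seq (A, c) | c <- word_nbrs C]
  else if e == o2 then [seq (a, C) | a <- word_nbrs A] else [::].

Lemma nbrs_adj e p w : p \in nbrs e -> e3c_adj (vert o w e) (vert p w e).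
Proof.
rewrite /nbrs /e3c_adj /vA /vB /vC /vd /=.
case: (e =P o0) => [->|_].
  by case/mapP => c /word_nbrs_differ1 Cc -> /=; rewrite !eqxx Cc orbT.
case: (e =P o2) => [->|_ //].
by case/mapP => a /word_nbrs_differ1 Aa -> /=; rewrite !eqxx Aa !orbT.
Qed.

Lemma nbrs_neq e p : p \in nbrs e -> p != o.
Proof.
rewrite /nbrs; case: ifP => _; last case: ifP => // _.
  by case/mapP => c /word_nbrs_differ1 /differ1_neq Cc ->; apply: contra Cc => /eqP [->].
by case/mapP => a /word_nbrs_differ1 /differ1_neq Aa ->; apply: contra Aa => /eqP [->].
Qed.

Lemma mem_nbrs e p : p \in nbrs e -> (e == o0) && (p.1 == A) || (e == o2) && (p.2 == C).
Proof.
rewrite /nbrs; case: (e =P o0) => [->|_]; first by case/mapP => c _ ->; rewrite eqxx.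
by case: (e =P o2) => // _; case/mapP => a _ ->; rewrite /= eqxx.
Qed.

Lemma nbrs_layer e e' p : p \in nbrs e -> p \in nbrs e' -> e = e'.
Proof.
move=> pe pe'; have := nbrs_neq pe; case: p pe pe' => a c pe pe'.
case/orP: (mem_nbrs pe) => /andP [/eqP -> /= /eqP E1];
  case/orP: (mem_nbrs pe') => /andP [/eqP -> /= /eqP E2] //.
all: by rewrite E1 E2 eqxx.
Qed.

Lemma uniq_nbrs e : uniq (nbrs e).
Proof.
rewrite /nbrs; case: ifP => _; last case: ifP => // _.
  by rewrite map_inj_uniq ?uniq_word_nbrs // => c c' [].
by rewrite map_inj_uniq ?uniq_word_nbrs // => a a' [].
Qed.

Lemma size_nbrs e : e != o1 -> r <= t -> 2 * r <= size (nbrs e).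
Proof.
move=> /eqP e1 le_rt; rewrite /nbrs; case: (e =P o0) => [_|e0].
  by rewrite size_map size_word_nbrs; lia.
case: (e =P o2) => [_|e2]; first by rewrite size_map size_word_nbrs.
by case: e e0 e1 e2 => [[|[|[|k]]] ek] // e0 e1 e2; [case: e0|case: e1|case: e2]; apply: val_inj.
Qed.

Lemma nbrs_exists e : e != o1 -> 0 < r -> r <= t -> exists p, p \in nbrs e.
Proof.
move=> e1 r_gt0 le_rt; have := size_nbrs e1 le_rt.
by case: (nbrs e) => [|p ?] /=; [lia | exists p; rewrite mem_head].
Qed.

End Frames.

Section Detours.
Variables (r s t : nat) (A : word r) (C : word t) (B B' : word s).
Hypothesis neq_BB' : B != B'.
Local Notation frame := (word r * word t)%type.
Local Notation o := (A, C).
Local Notation vert := (@vert r s t).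
Local Notation h := (size (mismatch B B')).

Definition lift1 (p : frame) (R : seq (word s)) : seq (vtx r s t) := [seq vert p w o1 | w <- R].

Definition hop p := extend (vert p B o1) (lift1 p (rot_route B B' 0)) (vert p B' o1).
Definition side d p := extend (vert p B d) (hop p) (vert p B' d).
Definition bridge e p := extend (vert o B e) (side e p) (vert o B' e).

Lemma route_lift1 p R : route (@differ1 s) B B' R ->
  route (@e3c_adj r s t) (vert p B o1) (vert p B' o1) (lift1 p R).
Proof. by apply: route_map => [w w' [] | w w' /adj_word]. Qed.

Lemma mem_lift1 p R z : z \in lift1 p R -> frame_of z = p /\ vd z = o1.
Proof. by case/mapP => w _ ->; rewrite frame_of_vert. Qed.

Lemma mem_hop p z : z \in hop p -> frame_of z = p /\ vd z = o1.
Proof. by rewrite mem_extend => /or3P [/eqP ->|/mem_lift1|/eqP ->]; rewrite ?frame_of_vert. Qed.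

Lemma mem_side d p z : z \in side d p -> frame_of z = p.
Proof. by rewrite mem_extend => /or3P [/eqP ->|/mem_hop []|/eqP ->]; rewrite ?frame_of_vert. Qed.

Lemma mem_bridge e p z : z \in bridge e p -> frame_of z = p \/ frame_of z = o /\ vd z = e.
Proof.
rewrite mem_extend => /or3P [/eqP ->|/mem_side|/eqP ->]; rewrite ?frame_of_vert; by [right|left].
Qed.

Lemma vert_neq p d : vert p B d != vert p B' d.
Proof. by apply: contra neq_BB' => /eqP [->]. Qed.

Lemma route_hop p d : d != o1 -> route (@e3c_adj r s t) (vert p B d) (vert p B' d) (hop p).
Proof.
move=> d1; apply: (route_extend (P := fun z => vd z == o1)) => //.
- exact/route_lift1/route_rot_route.
- exact: adj_layer.
- by apply: adj_layer; rewrite eq_sym.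
- by move=> z /mem_hop [_ ->].
- exact: vert_neq.
Qed.

Lemma route_side d p : d != o1 -> p \in nbrs A C d ->
  route (@e3c_adj r s t) (vert o B d) (vert o B' d) (side d p).
Proof.
move=> d1 pd; apply: (route_extend (P := fun z => frame_of z == p)).
- exact: route_hop.
- exact: nbrs_adj.
- exact/e3c_adj_sym/nbrs_adj.
- by move=> z /mem_side ->.
- by rewrite frame_of_vert eq_sym (nbrs_neq pd).
- by rewrite frame_of_vert eq_sym (nbrs_neq pd).
- exact: vert_neq.
Qed.

Lemma route_bridge d e p : d != e -> p \in nbrs A C e ->
  route (@e3c_adj r s t) (vert o B d) (vert o B' d) (bridge e p).
Proof.
move=> de pe; have e1 : e != o1 by apply: contraTneq pe => ->.
apply: (route_extend (P := fun z => (vd z == e) || (frame_of z == p))).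
- exact: route_side.
- by apply: adj_layer.
- by apply: adj_layer; rewrite eq_sym.
- by move=> z /mem_bridge [->|[_ ->]]; rewrite eqxx ?orbT.
- by rewrite frame_of_vert negb_or de eq_sym (nbrs_neq pe).
- by rewrite frame_of_vert negb_or de eq_sym (nbrs_neq pe).
- exact: vert_neq.
Qed.

Lemma size_hop p : size (hop p) = h.+1.
Proof. by rewrite size_extend !size_map size_iota prednK // size_mismatch_gt0. Qed.

Lemma size_side d p : size (side d p) = h + 3.
Proof. by rewrite /side size_extend size_hop addn3. Qed.

Lemma size_bridge e p : size (bridge e p) = h + 5.
Proof. by rewrite /bridge size_extend size_side !addnS. Qed.

End Detours.

Section Families.
Variables (r s t : nat) (A : word r) (C : word t) (B B' : word s).
Hypotheses (neq_BB' : B != B') (r_gt0 : 0 < r) (le_rs : r <= s) (le_st : s <= t).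
Local Notation o := (A, C).
Local Notation vert := (@vert r s t).
Local Notation h := (size (mismatch B B')).

Definition short_path d (q : seq (vtx r s t)) : bool :=
  is_path_int (vert o B d) (vert o B' d) q && (path_length q <= s + 6).

(* Only the head of a family may be empty: it is the direct edge from u to v when
   h = 1. *)
Definition path_family d (L : seq (seq (vtx r s t))) : Prop :=
  [/\ 2 * r + 2 <= size L, all (short_path d) L,
      pairwise (fun p q => [disjoint p & q]) L & all (fun q => q != [::]) (behead L)].

Let le_hs : h <= s := size_mismatch_le B B'.
Let le_rt : r <= t := leq_trans le_rs le_st.

Lemma bridge_short d e p : d != e -> p \in nbrs A C e -> short_path d (bridge A C B B' e p).
Proof.
move=> de pe; apply/andP; split; first exact: route_bridge.
by rewrite /path_length size_bridge //; lia.
Qed.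

Lemma bridge_frame_o e p z : p \in nbrs A C e -> z \in bridge A C B B' e p ->
  frame_of z = o -> vd z = e.
Proof. by move=> pe /mem_bridge [-> /eqP|[_ ->]]; rewrite ?(negbTE (nbrs_neq pe)). Qed.

Lemma bridges_disjoint p p' : p \in nbrs A C o0 -> p' \in nbrs A C o2 ->
  [disjoint bridge A C B B' o0 p & bridge A C B B' o2 p'].
Proof.
move=> p0 p2; apply/disjoint_seqP => z zb; apply/negP => zb'.
have [pz|oz] := mem_bridge zb.
  have [pz'|[oz' _]] := mem_bridge zb'.
    have pp' : p = p' by rewrite -pz pz'.
    by have := nbrs_layer p0; rewrite pp' => /(_ _ p2) /(congr1 val).
  by move: (nbrs_neq p0); rewrite -pz oz' eqxx.
by case: oz => oz; rewrite (bridge_frame_o p2 zb' oz).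
Qed.

Lemma outer_layer_family d e : d != o1 -> e != o1 -> d != e -> exists L, path_family d L.
Proof.
move=> d1 e1 de; have [pe pe_in] := nbrs_exists A C e1 r_gt0 le_rt.
exists ([seq side B B' d p | p <- nbrs A C d] ++ [:: hop B B' o; bridge A C B B' e pe]).
split.
- by rewrite size_cat size_map /=; have := size_nbrs A C d1 le_rt; lia.
- rewrite all_cat /= andbT bridge_short // andbT; apply/andP; split.
    apply/allP => _ /mapP [p pd ->]; apply/andP; split; first exact: route_side.
    by rewrite /path_length size_side //; lia.
  apply/andP; split; first exact: route_hop.
  by rewrite /path_length size_hop //; lia.
- rewrite pairwise_cat pairwise2; apply/and3P; split.
  + apply/allrelP => _ q /mapP [p pd ->] q_in; apply/disjoint_seqP => z /mem_side pz.
    have p_ne_o := nbrs_neq pd; apply/negP; move: q_in; rewrite !inE => /orP [] /eqP -> .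
      by case/mem_hop => oz _; rewrite -pz oz eqxx in p_ne_o.
    case/mem_bridge => [pz'|[oz _]]; last by rewrite -pz oz eqxx in p_ne_o.
    by move: de; rewrite (nbrs_layer pd (_ : p \in nbrs A C e)) ?eqxx // -pz pz'.
  + apply: pairwise_disjoint_map; first exact: uniq_nbrs.
    move=> p p' _ _ pp'; apply/disjoint_seqP => z /mem_side pz; apply/negP => /mem_side pz'.
    by rewrite -pz pz' eqxx in pp'.
  + apply/disjoint_seqP => z /mem_hop [oz vz]; apply/negP => /bridge_frame_o /(_ oz).
    by move/(_ pe_in) => ez; rewrite -ez vz eqxx in e1.
- have all_ne : all (fun q => q != [::]) [:: hop B B' o; bridge A C B B' e pe] by [].
  case: (nbrs A C d) => [|p ps] //=; rewrite all_cat all_ne andbT.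
  by apply/allP => _ /mapP [? _ ->].
Qed.

Lemma layer1_family : exists L, path_family o1 L.
Proof.
have [p0 p0_in] := nbrs_exists A C (isT : o0 != o1) r_gt0 le_rt.
have [p2 p2_in] := nbrs_exists A C (isT : o2 != o1) r_gt0 le_rt.
exists ([seq lift1 o R | R <- cube_routes B B'] ++
        [:: bridge A C B B' o0 p0; bridge A C B B' o2 p2]).
have bridges_avoid_layer1 R e p : p \in nbrs A C e -> e != o1 ->
    [disjoint lift1 o R & bridge A C B B' e p].
  move=> pe e1; apply/disjoint_seqP => z /mem_lift1 [oz vz]; apply/negP => /bridge_frame_o.
  by move=> /(_ pe oz) ez; rewrite -ez vz eqxx in e1.
split.
- by rewrite size_cat size_map size_cube_routes /=; lia.
- rewrite all_cat /= (bridge_short _ p0_in) // (bridge_short _ p2_in) // !andbT.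
  apply/allP => _ /mapP [R + ->].
  move/(allP (cube_routes_route neq_BB')) => /andP [RR' sizeR].
  apply/andP; split; first exact: route_lift1.
  by rewrite /path_length size_map; apply: leq_ltn_trans sizeR _; lia.
- rewrite pairwise_cat pairwise2 bridges_disjoint // andbT; apply/andP; split.
    apply/allrelP => _ q /mapP [R _ ->]; rewrite !inE => /orP [] /eqP ->.
      exact: bridges_avoid_layer1.
    exact: bridges_avoid_layer1.
  rewrite pairwise_map; apply: sub_pairwise (cube_routes_disjoint neq_BB') => R R'.
  by apply: disjoint_map => w w' [].
- move: (cube_routes_behead neq_BB') (size_cube_routes B B').
  case: (cube_routes B B') => [|R Rs] /=; first lia.
  move=> neRs _; rewrite all_cat andbT /=; apply/allP => _ /mapP [R' R'_in ->].
  by rewrite -size_eq0 size_map size_eq0 (allP neRs).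
Qed.

End Families.

Theorem lemma8 (r s t : nat) (u v : vtx r s t) :
  1 <= r -> r <= s -> s <= t ->
  u != v -> vA u = vA v -> vC u = vC v -> vd u = vd v ->
  exists ps : seq (seq (vtx r s t)),
    [/\ size ps = (2 * r + 2)%N,
        uniq ps,
        all (fun q => is_path_int u v q && (path_length q <= s + 6)) ps &
        forall i j : nat, i < size ps -> j < size ps -> i != j ->
          [disjoint nth [::] ps i & nth [::] ps j]].
Proof.
move=> r_gt0 le_rs le_st; case: u => [[[A B] C] d]; case: v => [[[A' B'] C'] d'] uv.
rewrite /vA /vC /vd /= => eA eC ed; subst A' C' d'.
have neq_BB' : B != B' by apply: contraNneq uv => ->.
have [L fam] : exists L, path_family A C B B' d L.
  have [->|d1] := eqVneq d o1; first exact: layer1_family.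
  pose e := if d == o0 then o2 else o0.
  have e1 : e != o1 by rewrite /e; case: ifP.
  have de : d != e by rewrite /e; case: (d =P o0) => [->|/eqP].
  exact: outer_layer_family d1 e1 de.
case: fam => size_L all_L disj_L ne_L.
exact: take_pairwise_disjoint size_L all_L disj_L ne_L.
Qed.
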